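(* Let $b\ge2$ be an integer and $\mathbf{x}=x_1x_2\ldots$ an infinite word over $\{0,1,\ldots,b-1\}$ which is not eventually periodic. Then the irrational number $\xi_{\mathbf{x},b}=\sum_{k\ge1}x_k b^{-k}$ satisfies $$\mu(\xi_{\mathbf{x},b})\ge\frac{\mathrm{rep}(\mathbf{x})}{\mathrm{rep}(\mathbf{x})-1},$$ where the right-hand side is $+\infty$ if $\mathrm{rep}(\mathbf{x})=1$ (and is $1$ if $\mathrm{rep}(\mathbf{x})=+\infty$).
   Context: With $x_i^j=x_i\cdots x_j$, $r(n,\mathbf{x})=\min\{m\ge1:\ x_i^{i+n-1}=x_{m-n+1}^{m}\text{ for some } 1\le i\le m-n\}$ and $\mathrm{rep}(\mathbf{x})=\liminf_{n\to\infty}r(n,\mathbf{x})/n$. The irrationality exponent $\mu(\xi)$ of a real number $\xi$ is the supremum of the real numbers $\mu$ such that $|\xi-p/q|<q^{-\mu}$ has infinitely many solutions in rationals $p/q$. *)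

From HB Require Import structures.
From mathcomp Require Import all_boot all_order all_algebra.
From mathcomp Require Import all_classical all_reals all_analysis.
Set Implicit Arguments. Unset Strict Implicit. Unset Printing Implicit Defensive.
Import Order.TTheory GRing.Theory Num.Theory.
Import numFieldNormedType.Exports.
Local Open Scope classical_set_scope.
Local Open Scope ring_scope.

(* Infinite words x = x_1 x_2 ... are functions x : nat -> nat, 1-indexed:
   the letter x_k is x k for k >= 1 (the value x 0 is never used). *)

Definition eventually_periodic (x : nat -> nat) : Prop :=
  exists p N : nat, (0 < p)%N /\ forall k, (N <= k)%N -> x (k + p)%N = x k.

Definition r_set (x : nat -> nat) (n : nat) : set nat :=
  [set m | (1 <= m)%N /\
     exists i : nat, [/\ (1 <= i)%N, (i <= m - n)%N &
        forall j : nat, (j < n)%N -> x (i + j)%N = x (m - n + 1 + j)%N]].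

(* r(n,x) = min (r_set x n), as an extended real (the minimum of a set of
   naturals is its infimum) *)
Definition r_fun (R : realType) (x : nat -> nat) (n : nat) : \bar R :=
  ereal_inf [set ((m%:R : R)%:E) | m in r_set x n].

Definition rep (R : realType) (x : nat -> nat) : \bar R :=
  limn_einf (fun n => (r_fun R x n * ((n%:R : R)^-1)%:E)%E).

Definition xi_word (R : realType) (x : nat -> nat) (b : nat) : R :=
  limn (fun N => \sum_(1 <= k < N) ((x k)%:R / (b%:R) ^+ k : R)).

Definition irrationality_exponent (R : realType) (xi : R) : \bar R :=
  ereal_sup [set mu%:E | mu in
    [set mu : R | infinite_set
       [set r : rat | `|xi - ratr r| < ((denq r)%:~R : R) `^ (- mu)]]].

Definition rep_bound (R : realType) (t : \bar R) : \bar R :=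
  match t with
  | +oo%E => 1%E
  | -oo%E => +oo%E
  | EFin s => if s == 1 then +oo%E else (s / (s - 1))%:E
  end.

From HB Require Import structures.
From mathcomp Require Import all_boot all_order all_algebra.
From mathcomp Require Import all_classical all_reals all_analysis.
From mathcomp Require Import lra ring zify.
Set Implicit Arguments. Unset Strict Implicit. Unset Printing Implicit Defensive.
Import Order.TTheory GRing.Theory Num.Theory.
Import numFieldNormedType.Exports.
Local Open Scope classical_set_scope.
Local Open Scope ring_scope.

(* Suppose the factor of length n of x ending at position m already occurs at a
   position i <= m - n.  Then x_i ... x_m has period p = m - n + 1 - i, so
   x_1 ... x_m is a prefix of the eventually periodic word with preperiod i - 1
   and period p.  That word has a rational value with denominator q <= b^(m-n),
   it agrees with xi on m digits, hence lies within b^(-m) <= q^(-m/(m-n)) of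
   xi, and it differs from xi since x is not eventually periodic.  When
   rep(x) < c, such repetitions exist with m < c n for arbitrarily large n,
   giving infinitely many approximations of every exponent mu < c/(c-1).
   Exponents mu < 1 are realised by the truncations of xi. *)

Lemma not_eventually_periodic_neq (x : nat -> nat) (a N : nat) :
  ~ eventually_periodic x -> exists j, (N < j)%N /\ x j != a.
Proof.
move=> hnp; apply: contrapT => H; apply: hnp; exists 1%N, N.+1; split => // k hk.
have e j : (N < j)%N -> x j = a.
  by move=> hj; apply/eqP; apply: contraT => hn; exfalso; apply: H; exists j.
by rewrite !e ?addn1 // ltnW.
Qed.

Lemma repeat_block_periodic (x : nat -> nat) i p k : (0 < p)%N ->
  (forall j, (j < k)%N -> x (i + j)%N = x (i + p + j)%N) ->
  forall t, (t < p + k)%N -> x (i + t)%N = x (i + t %% p)%N.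
Proof.
move=> hp hblk; elim/ltn_ind => t IH ht.
have [htp|hpt] := ltnP t p; first by rewrite modn_small.
have -> : (i + t = i + p + (t - p))%N by lia.
rewrite -hblk; last lia.
rewrite IH; try lia.
by congr (x (i + _)); rewrite -{2}(subnK hpt) modnDr.
Qed.

Definition drop_word (k : nat) (z : nat -> nat) : nat -> nat := fun j => z (j + k)%N.

Definition approx_exponent (R : realType) (xi mu : R) : Prop :=
  infinite_set [set r : rat | `|xi - ratr r| < ((denq r)%:~R : R) `^ (- mu)].

Lemma approx_exponent_le (R : realType) (xi mu mu' : R) :
  mu <= mu' -> approx_exponent xi mu' -> approx_exponent xi mu.
Proof.
move=> hmu hM hfin; apply: hM; apply: sub_finite_set hfin => r /= h.
apply: (lt_le_trans h); apply: ler_powR; last by rewrite lerN2.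
by rewrite ler1z -gtz0_ge1 denq_gt0.
Qed.

Lemma exists_dist_lower_bound (R : realType) (xi : R) (s : seq rat) :
  exists2 eps : R, 0 < eps & forall r, r \in s -> ratr r != xi -> eps <= `|xi - ratr r|.
Proof.
elim: s => [|a s [e e0 he]]; first by exists 1.
have [ha|ha] := eqVneq (ratr a) xi.
  exists e => // r; rewrite inE => /orP[/eqP ->|]; first by rewrite ha eqxx.
  exact: he.
exists (Num.min e `|xi - ratr a|); first by rewrite lt_min e0 normr_gt0 subr_eq0 eq_sym ha.
move=> r; rewrite inE => /orP[/eqP ->|rs] hr; first by rewrite ge_min lexx orbT.
by rewrite ge_min he.
Qed.

Section Expansion.
Variables (R : realType) (b : nat).
Hypothesis hb : (2 <= b)%N.

Definition digits (z : nat -> nat) := forall k, (1 <= k)%N -> (z k < b)%N.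

Definition xi_trunc (z : nat -> nat) (N : nat) : R :=
  \sum_(1 <= k < N) ((z k)%:R / (b%:R) ^+ k : R).

Local Notation xi z := (xi_word R z b).
Local Notation c := ((b%:R : R)^-1).

Lemma xi_wordE z : xi z = limn (xi_trunc z). Proof. by []. Qed.

Lemma b_gt0 : (0 : R) < b%:R. Proof. by rewrite ltr0n; case: b hb. Qed.
Lemma mulbV : (b%:R : R) * c = 1. Proof. by rewrite divff // gt_eqF // b_gt0. Qed.
Lemma c_gt0 : 0 < c. Proof. by rewrite invr_gt0 b_gt0. Qed.
Lemma c_ge0 : 0 <= c. Proof. exact: ltW c_gt0. Qed.
Lemma expc_gt0 k : 0 < c ^+ k. Proof. exact: exprn_gt0 c_gt0. Qed.

Lemma xi_truncS z N : (1 <= N)%N -> xi_trunc z N.+1 = xi_trunc z N + (z N)%:R * c ^+ N.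
Proof. by move=> hN; rewrite /xi_trunc big_nat_recr //= exprVn. Qed.

Lemma xi_trunc_ge0 z N : 0 <= xi_trunc z N.
Proof.
apply: sumr_ge0 => k _; rewrite -exprVn.
by apply: mulr_ge0 => //; apply: exprn_ge0; exact: c_ge0.
Qed.

Lemma xi_trunc_le z N : digits z -> xi_trunc z N.+1 <= 1 - c ^+ N.
Proof.
move=> hz; elim: N => [|N IH]; first by rewrite /xi_trunc big_geq // expr0 subrr.
rewrite xi_truncS //.
have hzN : (z N.+1)%:R <= (b%:R - 1 : R).
  by rewrite lerBrDr natr1 ler_nat; apply: hz.
have e : (b%:R - 1) * c ^+ N.+1 = c ^+ N - c ^+ N.+1.
  by rewrite mulrBl exprS mulrA mulbV !mul1r.
have := ler_wpM2r (exprn_ge0 N.+1 c_ge0) hzN.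
rewrite e; lra.
Qed.

Lemma xi_trunc_le1 z N : digits z -> xi_trunc z N <= 1.
Proof.
move=> hz; case: N => [|N]; first by rewrite /xi_trunc big_geq.
apply: le_trans (xi_trunc_le N hz) _; rewrite lerBlDr lerDl.
exact: exprn_ge0 c_ge0.
Qed.

Lemma nondecreasing_xi_trunc z : nondecreasing_seq (xi_trunc z).
Proof.
apply/nondecreasing_seqP => -[|n]; first by rewrite /xi_trunc !big_geq.
rewrite (@xi_truncS z n.+1) // lerDl.
by apply: mulr_ge0 => //; apply: exprn_ge0; exact: c_ge0.
Qed.

Lemma xi_trunc_cvg z : digits z -> xi_trunc z @ \oo --> xi z.
Proof.
move=> hz; apply/cvg_ex; exists (sup (range (xi_trunc z))).
apply: nondecreasing_cvgn; first exact: nondecreasing_xi_trunc.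
by exists 1 => _ [n _ <-]; exact: xi_trunc_le1.
Qed.

Lemma xi_ge0 z : digits z -> 0 <= xi z.
Proof.
move=> hz; apply: limr_ge; first exact: (cvgP _ (xi_trunc_cvg hz)).
by near=> n; exact: xi_trunc_ge0.
Unshelve. all: end_near.
Qed.

Lemma xi_le1 z : digits z -> xi z <= 1.
Proof.
move=> hz; apply: limr_le; first exact: (cvgP _ (xi_trunc_cvg hz)).
by near=> n; exact: xi_trunc_le1.
Unshelve. all: end_near.
Qed.

Lemma digits_drop k z : digits z -> digits (drop_word k z).
Proof. by move=> hz j hj; apply: hz; rewrite addn_gt0 hj. Qed.

Lemma xi_trunc_drop z k N :
  xi_trunc z (N.+1 + k) = xi_trunc z k.+1 + c ^+ k * xi_trunc (drop_word k z) N.+1.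
Proof.
elim: N => [|N IH].
  by rewrite /xi_trunc [X in _ + _ * X]big_geq // mulr0 addr0 add1n.
rewrite (@xi_truncS z (N.+1 + k)) ?addn_gt0 // IH (@xi_truncS (drop_word k z) N.+1) //.
by rewrite mulrDr addrA /drop_word mulrCA -exprD addnC.
Qed.

Lemma xi_drop z k : digits z -> xi z = xi_trunc z k.+1 + c ^+ k * xi (drop_word k z).
Proof.
move=> hz; rewrite xi_wordE; apply: cvg_lim => //.
have hd : (fun n => xi_trunc (drop_word k z) n.+1) @ \oo --> xi (drop_word k z).
  by rewrite (cvg_shiftS (xi_trunc _)); exact: xi_trunc_cvg (digits_drop k hz).
rewrite -(cvg_shiftn k.+1 (xi_trunc z)).
have hs : (fun n => xi_trunc z k.+1 + c ^+ k * xi_trunc (drop_word k z) n.+1) @ \oo -->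
    xi_trunc z k.+1 + c ^+ k * xi (drop_word k z).
  by apply: cvgD; [exact: cvg_cst | exact: cvgMr].
apply: cvg_trans hs; apply: near_eq_cvg; near=> n.
by rewrite /= -xi_trunc_drop addSnnS.
Unshelve. all: end_near.
Qed.

Lemma eq_xi_trunc z1 z2 m : (forall j, (1 <= j <= m)%N -> z1 j = z2 j) ->
  xi_trunc z1 m.+1 = xi_trunc z2 m.+1.
Proof. by move=> h; apply: eq_big_nat => k hk; rewrite h. Qed.

Lemma eq_xi z1 z2 : (forall j, (1 <= j)%N -> z1 j = z2 j) -> xi z1 = xi z2.
Proof.
move=> h; rewrite !xi_wordE (_ : xi_trunc z1 = xi_trunc z2) //; apply: funext => N.
by apply: eq_big_nat => k /andP[k1 _]; rewrite h.
Qed.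

Lemma xi_dist_common_prefix z1 z2 m : digits z1 -> digits z2 ->
  (forall j, (1 <= j <= m)%N -> z1 j = z2 j) -> `|xi z1 - xi z2| <= c ^+ m.
Proof.
move=> h1 h2 h; rewrite (xi_drop m h1) (xi_drop m h2) (eq_xi_trunc h).
have cp := expc_gt0 m.
have := xi_ge0 (digits_drop m h1); have := xi_le1 (digits_drop m h1).
have := xi_ge0 (digits_drop m h2); have := xi_le1 (digits_drop m h2).
set v1 := xi (drop_word m z1); set v2 := xi (drop_word m z2) => ? ? ? ?.
rewrite opprD addrACA subrr add0r -mulrBr normrM (gtr0_norm cp) -[leRHS]mulr1 ler_pM2l //.
by rewrite ler_norml; apply/andP; split; lra.
Qed.

Lemma xi_lt1 z j : digits z -> (1 <= j)%N -> ((z j).+1 < b)%N -> xi z < 1.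
Proof.
move=> hz j1 hj; rewrite (xi_drop j hz) xi_truncS //.
have hv := xi_le1 (digits_drop j hz).
have hd := xi_trunc_le j.-1 hz; rewrite (prednK j1) in hd.
have hzj : (z j)%:R <= (b%:R - 2 : R).
  by rewrite -natrB ?ler_nat; lia.
have cp := expc_gt0 j.
have e : c ^+ j.-1 = b%:R * c ^+ j by rewrite -{2}(prednK j1) exprS mulrA mulbV mul1r.
have := ler_wpM2r (ltW cp) hzj; have := ler_wpM2l (ltW cp) hv.
rewrite e in hd; nra.
Qed.

Lemma xi_gt0 z j : digits z -> (1 <= j)%N -> (0 < z j)%N -> 0 < xi z.
Proof.
move=> hz j1 hj; rewrite (xi_drop j hz) xi_truncS //.
have cp := expc_gt0 j.
have hzj : (1 : R) <= (z j)%:R by rewrite ler1n.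
have := ler_wpM2r (ltW cp) hzj; rewrite mul1r.
have := mulr_ge0 (ltW cp) (xi_ge0 (digits_drop j hz)).
have := xi_trunc_ge0 z j; lra.
Qed.

Lemma xi_neq_first_diff z1 z2 k : digits z1 -> digits z2 -> (1 <= k)%N ->
  (forall j, (1 <= j < k)%N -> z1 j = z2 j) -> z1 k != z2 k ->
  0 < xi (drop_word k z1) < 1 -> xi z1 != xi z2.
Proof.
move=> h1 h2 k1 hag hk /andP[X0 X1].
have hd : xi_trunc z1 k = xi_trunc z2 k.
  by rewrite -(prednK k1); apply: eq_xi_trunc => j /andP[j1 jk]; apply: hag; lia.
rewrite (xi_drop k h1) (xi_drop k h2) !xi_truncS // hd -subr_eq0.
have cp := expc_gt0 k.
have := xi_ge0 (digits_drop k h2); have := xi_le1 (digits_drop k h2).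
set X := xi (drop_word k z1) in X0 X1 *; set Y := xi (drop_word k z2) => Y1 Y0.
set D := xi_trunc z2 k.
have -> : D + (z1 k)%:R * c ^+ k + c ^+ k * X - (D + (z2 k)%:R * c ^+ k + c ^+ k * Y)
   = c ^+ k * ((z1 k)%:R - (z2 k)%:R + X - Y) by ring.
rewrite mulf_eq0 gt_eqF //=.
case: (ltngtP (z1 k) (z2 k)) => hz; last by rewrite hz eqxx in hk.
- have : ((z1 k).+1%:R : R) <= (z2 k)%:R by rewrite ler_nat.
  by rewrite -natr1 => h; apply: ltr0_neq0; lra.
- have : ((z2 k).+1%:R : R) <= (z1 k)%:R by rewrite ler_nat.
  by rewrite -natr1 => h; apply: lt0r_neq0; lra.
Qed.

Lemma xi_neq_eventually_periodic x y : digits x -> digits y ->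
  ~ eventually_periodic x -> eventually_periodic y -> xi x != xi y.
Proof.
move=> hx hy hnp [p [N [hp hper]]].
have hP : exists k, (1 <= k)%N && (x k != y k).
  apply: contrapT => H; apply: hnp; exists p, N.+1; split => // k hk.
  have e j : (1 <= j)%N -> x j = y j.
    by move=> j1; apply/eqP; apply: contraT => hn; exfalso; apply: H; exists j; rewrite j1.
  by rewrite !e ?hper //; lia.
have [k /andP[k1 hk] kmin] := ex_minnP hP.
apply: (xi_neq_first_diff hx hy k1 _ hk).
  move=> j /andP[j1 jk]; apply/eqP; apply: contraT => hne.
  have /kmin : (1 <= j)%N && (x j != y j) by rewrite j1.
  by rewrite leqNgt jk.
have hxk := digits_drop k hx.
have [j [jk hj]] := not_eventually_periodic_neq 0 k hnp.
have [j' [jk' hj']] := not_eventually_periodic_neq b.-1 k hnp.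
apply/andP; split.
  by apply: (xi_gt0 (j := j - k)) => //; rewrite ?/drop_word ?subnK; lia.
apply: (xi_lt1 (j := j' - k)) => //; rewrite ?/drop_word ?subnK; try lia.
by have := hx j'; lia.
Qed.

Lemma xi_trunc_natE y K :
  (b%:R : R) ^+ K * xi_trunc y K.+1 = (\sum_(1 <= k < K.+1) y k * b ^ (K - k))%N%:R.
Proof.
rewrite /xi_trunc mulr_sumr natr_sum; apply: eq_big_nat => k /andP[_ kK].
rewrite natrM natrX mulrCA; congr (_ * _).
by rewrite -{1}(subnK (ltnSE kK)) exprD mulfK // expf_neq0 // gt_eqF // b_gt0.
Qed.

Lemma xi_rat_of_periodic y i p : digits y -> (0 < p)%N ->
  (forall j, (i < j)%N -> y (j + p)%N = y j) ->
  exists r : rat, ratr r = xi y /\ (denq r <= (b ^ (i + p))%N%:Z).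
Proof.
move=> hy hp hper.
have hV : xi (drop_word (i + p) y) = xi (drop_word i y).
  by apply: eq_xi => j j1; rewrite /drop_word addnA hper //; lia.
set V := xi (drop_word i y) in hV.
have scaled_xi K : xi (drop_word K y) = V ->
    exists A : nat, (b%:R : R) ^+ K * xi y = A%:R + V.
  move=> hK; exists (\sum_(1 <= k < K.+1) y k * b ^ (K - k))%N.
  by rewrite -xi_trunc_natE -hK (xi_drop K hy) mulrDr mulrA -exprMn mulbV expr1n mul1r.
have [A1 f1] := scaled_xi _ hV; have [A0 f0] := scaled_xi _ erefl.
have hbi : (b ^ i < b ^ (i + p))%N by rewrite ltn_exp2l //; lia.
set D := (b ^ (i + p) - b ^ i)%N.
have D0 : D%:R != 0 :> R by rewrite pnatr_eq0 subn_eq0 -ltnNge.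
have hD : (D%:R : R) * xi y = A1%:R - A0%:R.
  by rewrite natrB ?(ltnW hbi) // !natrX mulrBl f1 f0 opprD addrACA subrr addr0.
exists (fracq (A1%:Z - A0%:Z, D%:Z)); split.
  rewrite fracqE /= fmorph_div /= !ratr_int rmorphB /=.
  by apply: (mulfI D0); rewrite hD mulrC divfK.
rewrite den_fracq /= ifT ?eqz_nat -?lt0n ?subn_gt0 // lez_nat.
exact: leq_trans (leq_div _ _) (leq_subr _ _).
Qed.

Lemma expc_lt_powRN mu K m (d : int) : 0 <= mu -> mu * K%:R < m%:R ->
  0 < d -> d <= (b ^ K)%N%:Z -> c ^+ m < (d%:~R : R) `^ (- mu).
Proof.
move=> mu0 hK d0 dK.
have bp := b_gt0.
have hd0 : (0 : R) < d%:~R by rewrite ltr0z.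
have h1 : (d%:~R : R) `^ mu <= ((b ^ K)%N%:R : R) `^ mu.
  apply: ge0_ler_powR => //; rewrite ?nnegrE; [exact: ltW | by [] |].
  by rewrite -(ler_int R) in dK.
have h2 : ((b ^ K)%N%:R : R) `^ mu = (b%:R : R) `^ (K%:R * mu).
  by rewrite natrX -powR_mulrn ?ltW // powRrM.
have h3 : (b%:R : R) `^ (K%:R * mu) < (b%:R : R) ^+ m.
  rewrite -powR_mulrn ?ltW // /powR gt_eqF // ltr_expR ltr_pM2r; first by rewrite mulrC.
  by rewrite ln_gt0 // ltr1n.
rewrite powRN exprVn -[X in X < _]invrK ltf_pV2 ?posrE ?invr_gt0 ?exprn_gt0 ?powR_gt0 //.
by rewrite invrK; apply: le_lt_trans h1 _; rewrite h2.
Qed.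

Lemma approx_exponent_of_approximations xi mu : 0 <= mu ->
  (forall N, exists r K m, [/\ (N <= m)%N, mu * K%:R < m%:R, ratr r != xi,
      `|xi - ratr r| <= c ^+ m & denq r <= (b ^ K)%N%:Z]) -> approx_exponent xi mu.
Proof.
move=> mu0 H /finite_seqP [s hs].
have [eps e0 he] := exists_dist_lower_bound xi s.
set N := Num.bound (eps^-1).
have hN : eps^-1 < N%:R by apply: archi_boundP; rewrite invr_ge0 ltW.
have [r [K [m [hm hK hr hd hden]]]] := H N.
have rS : r \in s.
  have : [set` s] r by rewrite -hs; apply: le_lt_trans hd (expc_lt_powRN mu0 hK _ hden).
  by [].
have cm : c ^+ m <= c ^+ N.
  apply: ler_wiXn2l => //.
  by rewrite invr_le1 ?unitfE ?gt_eqF ?b_gt0 // ler1n; lia.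
have cN : c ^+ N < eps.
  rewrite exprVn -natrX -[eps]invrK ltf_pV2 ?posrE ?invr_gt0 ?ltr0n ?expn_gt0 ?e0; try lia.
  by apply: lt_trans hN _; rewrite ltr_nat; exact: ltn_expl.
by have := lt_le_trans (le_lt_trans hd (le_lt_trans cm cN)) (he r rS hr); rewrite ltxx.
Qed.

Lemma approx_by_eventually_periodic x y i p m : digits x -> ~ eventually_periodic x ->
  digits y -> (0 < p)%N -> (forall j, (i < j)%N -> y (j + p)%N = y j) ->
  (forall j, (1 <= j <= m)%N -> x j = y j) ->
  exists r : rat, [/\ ratr r != xi x, `|xi x - ratr r| <= c ^+ m &
      denq r <= (b ^ (i + p))%N%:Z].
Proof.
move=> hx hnp hy hp hper hag.
have [r [hr hd]] := xi_rat_of_periodic hy hp hper.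
exists r; rewrite hr; split => //; last exact: xi_dist_common_prefix.
rewrite eq_sym; apply: xi_neq_eventually_periodic => //.
by exists p, i.+1; split => // j hj; apply: hper.
Qed.

Lemma approx_by_prefix x N : digits x -> ~ eventually_periodic x ->
  exists r : rat, [/\ ratr r != xi x, `|xi x - ratr r| <= c ^+ N &
      denq r <= (b ^ (N + 1))%N%:Z].
Proof.
move=> hx hnp.
apply: (@approx_by_eventually_periodic x (fun j => if (j <= N)%N then x j else 0%N)) => //.
- move=> j j1 /=; case: ifP => _; [exact: hx | lia].
- by move=> j hj /=; rewrite !ifF //; apply/negbTE; rewrite -ltnNge; lia.
- by move=> j /andP[_ ->].
Qed.

Lemma approx_by_repetition x k m : digits x -> ~ eventually_periodic x ->
  (1 <= k)%N -> r_set x k m ->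
  (k < m)%N /\ exists r : rat, [/\ ratr r != xi x, `|xi x - ratr r| <= c ^+ m &
      denq r <= (b ^ (m - k))%N%:Z].
Proof.
move=> hx hnp k1 [m1 [i [i1 im hblk]]]; split; first lia.
set p := (m - k + 1 - i)%N.
have hp : (0 < p)%N by lia.
have hper := @repeat_block_periodic x i p k hp.
have -> : (m - k = i.-1 + p)%N by lia.
(* x_1 ... x_(i-1) followed by x_i ... x_(i+p-1) repeated forever *)
apply: (@approx_by_eventually_periodic x
  (fun j => if (j < i)%N then x j else x (i + (j - i) %% p)%N)) => //.
- by move=> j j1 /=; case: ifP => _; apply: hx; lia.
- move=> j hj /=; rewrite !ifF; try (apply/negbTE; rewrite -leqNgt; lia).
  by congr (x (i + _)); rewrite addnC -addnBA ?modnDl //; lia.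
- move=> j /andP[j1 jm] /=; case: ifP => // hji.
  rewrite -[in LHS](subnKC (_ : i <= j)%N); last lia.
  apply: hper; last lia.
  by move=> t ht; rewrite hblk //; congr x; lia.
Qed.
End Expansion.

Lemma rep_lt_repetitions (R : realType) (x : nat -> nat) (c' : R) :
  (rep R x < c'%:E)%E -> forall N, exists k m, [/\ (N <= k)%N, r_set x k m &
     m%:R < c' * k%:R].
Proof.
move=> hr N.
set u := fun n => (r_fun R x n * ((n%:R : R)^-1)%:E)%E.
have h1 : (einfs u N.+1 < c'%:E)%E.
  apply: le_lt_trans hr; rewrite /rep limn_einf_lim (cvg_lim _ (@cvg_einfs_sup R u)) //.
  by apply: ereal_sup_ubound; exists N.+1.
have [y [k hk <-] hy] := ereal_inf_lt h1.
have k0 : (0 < k)%N by apply: leq_trans hk.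
have hk' : (r_fun R x k < (c' * k%:R)%:E)%E.
  rewrite ltNge; apply/negP => h.
  have : ((c' * k%:R)%:E * ((k%:R : R)^-1)%:E <= u k)%E.
    by apply: lee_wpmul2r => //; rewrite lee_fin invr_ge0.
  rewrite -EFinM -mulrA divff ?mulr1 ?pnatr_eq0 -?lt0n // => h2.
  by have := lt_le_trans hy h2; rewrite ltxx.
have [z [m hm <-] hz] := ereal_inf_lt hk'.
by exists k, m; split => //; exact: ltnW.
Qed.

Lemma ereal_le_dense (R : realType) (t s : \bar R) :
  (forall mu : R, (mu%:E < t)%E -> (mu%:E <= s)%E) -> (t <= s)%E.
Proof.
case: t => [r| |] h; last by rewrite leNye.
- case: s h => [s| |] h; last 2 first.
  + by rewrite leey.
  + have : ((r - 1)%:E <= -oo)%E by apply: h; rewrite lte_fin; lra.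
    by rewrite leeNy_eq.
  rewrite lee_fin leNgt; apply/negP => hs.
  have : (r + s) / 2 <= s by rewrite -lee_fin; apply: h; rewrite lte_fin; lra.
  lra.
- by rewrite (eq_infty (fun r => h r (ltry r))) lexx.
Qed.

Lemma approx_exponent_lt1 (R : realType) b x (mu : R) : (2 <= b)%N -> digits b x ->
  ~ eventually_periodic x -> mu < 1 -> approx_exponent (xi_word R x b) mu.
Proof.
move=> hb hx hnp; wlog mu0 : mu / 0 <= mu => [H mu1|mu1].
  have [/H|mu_lt0] := leP 0 mu; first exact.
  by apply: (@approx_exponent_le _ _ mu 0); [exact: ltW | apply: H].
apply: (approx_exponent_of_approximations hb mu0) => N.
have hmu : 0 < 1 - mu by lra.
set N' := (N + Num.bound ((1 - mu)^-1))%N.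
have hN' : 1 < N'%:R * (1 - mu).
  rewrite -ltr_pdivrMr // div1r; apply: lt_le_trans (archi_boundP _) _.
    by rewrite invr_ge0 ltW.
  by rewrite ler_nat leq_addl.
have [r [h1 h2 h3]] := approx_by_prefix R hb N' hx hnp.
exists r, (N' + 1)%N, N'; split => //; first exact: leq_addr.
by rewrite natrD; nra.
Qed.

Lemma approx_exponent_of_rep_lt (R : realType) b x (mu c' : R) : (2 <= b)%N ->
  digits b x -> ~ eventually_periodic x -> 1 <= mu -> (mu - 1) * c' < mu ->
  (rep R x < c'%:E)%E -> approx_exponent (xi_word R x b) mu.
Proof.
move=> hb hx hnp mu1 hc hr; apply: (approx_exponent_of_approximations hb); first lra.
move=> N; have [k [m [hk hm hmk]]] := rep_lt_repetitions hr N.+1.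
have [km [r [h1 h2 h3]]] := approx_by_repetition R hb hx hnp (leq_trans (ltn0Sn N) hk) hm.
exists r, (m - k)%N, m; split => //; first lia.
rewrite (natrB _ (ltnW km)).
have kp : (0 : R) < k%:R by rewrite ltr0n; lia.
have e1 : (mu - 1) * m%:R <= (mu - 1) * c' * k%:R.
  by rewrite -mulrA; apply: ler_wpM2l; [lra | exact: ltW].
have e2 : (mu - 1) * c' * k%:R < mu * k%:R by rewrite ltr_pM2r.
lra.
Qed.

Lemma rep_bound_gt (R : realType) (t : \bar R) (mu : R) : 1 <= mu ->
  (mu%:E < rep_bound t)%E -> exists c' : R, (t < c'%:E)%E /\ (mu - 1) * c' < mu.
Proof.
move=> mu1; case: t => [s| |] /= hmu; last 2 first.
- by move: hmu; rewrite lte_fin; lra.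
- by exists 1; rewrite ltNye; split => //; lra.
have hs : s * (mu - 1) < mu.
  move: hmu; case: eqP => [-> _ | hs1]; first lra.
  rewrite lte_fin; case: (ltrgtP s 1) => hs //.
  + by rewrite ltr_ndivlMr; [nra | lra].
  + by rewrite ltr_pdivlMr; [nra | lra].
set e := (mu - s * (mu - 1)) / (2 * mu).
have e0 : 0 < e by rewrite divr_gt0 //; lra.
have ed : e * (2 * mu) = mu - s * (mu - 1) by rewrite divfK // gt_eqF //; lra.
exists (s + e); split; first by rewrite lte_fin; lra.
have : (mu - 1) * e < 2 * mu * e by rewrite ltr_pM2r //; lra.
nra.
Qed.

Theorem theorem4p2 (R : realType) (b : nat) (x : nat -> nat) :
  (2 <= b)%N ->
  (forall k : nat, (1 <= k)%N -> (x k < b)%N) ->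
  ~ eventually_periodic x ->
  (rep_bound (rep R x) <= irrationality_exponent (xi_word R x b))%E.
Proof.
move=> hb hx hnp; apply: ereal_le_dense => mu hmu.
apply: ereal_sup_ubound; exists mu => //.
have [mu1|mu1] := ltP mu 1; first exact: approx_exponent_lt1.
have [c' [hrep hc]] := rep_bound_gt mu1 hmu.
exact: approx_exponent_of_rep_lt hc hrep.
Qed.
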